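(* There is $n_0$ such that for all $n\ge n_0$ and all $d\le n/2$, every $n$-vertex $d$-regular graph $F$ is guest-good with some value $t\ge0.01n\sqrt{d}$.
   Context: For a vertex $u$ and set $S$, $N_S(u)$ is the set of neighbors of $u$ in $S$ and $d_S(u)=|N_S(u)|$. An $n$-vertex graph $F$ is guest-good with value $t$ if there is a partition $V(F)=U\cup V$ with $|U|=\lfloor n/2\rfloor$, distinct vertices $u_1,u_1',\dots,u_m,u_m'\in U$ with $m\le0.05n$, and integers $d_1,\dots,d_m\ge1$, such that $t=\sum_{i=1}^m\sqrt{d_i}$ and for every $i\in[m]$: (1) $|N_V(u_i)\setminus N_V(u_i')|\ge0.01d_i$; (2) $|N_V(u_i)\setminus N_V(u_i')|\le\frac23|V|$ and $|N_V(u_i')\setminus N_V(u_i)|\le\frac23|V|$; (3) $U$ is an independent set in $F$, or $|d_V(u_i)-d_V(u_i')|\le20\sqrt{d_i}$. *)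

From mathcomp Require Import all_boot all_order all_algebra.
From mathcomp Require Import reals.
Set Implicit Arguments. Unset Strict Implicit. Unset Printing Implicit Defensive.
Import Order.TTheory GRing.Theory Num.Theory.
Local Open Scope ring_scope.

Definition simple_graph (n : nat) (e : rel 'I_n) : Prop :=
  symmetric e /\ irreflexive e.

Definition nbhd (n : nat) (e : rel 'I_n) (S : {set 'I_n}) (u : 'I_n) : {set 'I_n} :=
  [set w in S | e u w].

Definition regular (n : nat) (e : rel 'I_n) (d : nat) : Prop :=
  forall v : 'I_n, #|[set w | e v w]| = d.

Definition independent (n : nat) (e : rel 'I_n) (U : {set 'I_n}) : Prop :=
  forall x y, x \in U -> y \in U -> ~~ e x y.

Definition guest_good (R : realType) (n : nat) (e : rel 'I_n) (t : R) : Prop :=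
  exists U : {set 'I_n},
    #|U| = n./2 /\
    let V := ~: U in
    exists (m : nat) (u u' : 'I_m -> 'I_n) (dd : 'I_m -> nat),
      injective u /\ injective u' /\ (forall i j, u i != u' j) /\
      (forall i, u i \in U /\ u' i \in U) /\
      (m%:R <= n%:R / 20%:R :> R) /\
      (forall i, (1 <= dd i)%N) /\
      t = \sum_(i < m) Num.sqrt ((dd i)%:R : R) /\
      (forall i : 'I_m,
            [/\ (dd i)%:R / 100%:R <= (#|nbhd e V (u i) :\: nbhd e V (u' i)|)%:R :> R,
                (#|nbhd e V (u i) :\: nbhd e V (u' i)|)%:R <= 2%:R / 3%:R * (#|V|)%:R :> R,
                (#|nbhd e V (u' i) :\: nbhd e V (u i)|)%:R <= 2%:R / 3%:R * (#|V|)%:R :> R &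
                independent e U \/
                `|(#|nbhd e V (u i)|)%:R - (#|nbhd e V (u' i)|)%:R| <= 20%:R * Num.sqrt ((dd i)%:R) :> R]).

From mathcomp Require Import all_boot all_order all_algebra.
From mathcomp Require Import reals.
From mathcomp Require Import ring lra zify.
Set Implicit Arguments. Unset Strict Implicit. Unset Printing Implicit Defensive.
Import Order.TTheory GRing.Theory Num.Theory.
Local Open Scope ring_scope.

(* Let k = n - n/2 and draw the host half V among the k-subsets of the vertices.  For
   vertices x <> w let D = N(x) \ N(w) \ {w} and E = N(w) \ N(x) \ {x} be their private
   neighbourhoods: they are disjoint and, by regularity, of the same size p, and when x, w are
   outside V the conditions of guest-goodness for the pair (x, w) with d_i = d only involve
   |D ∩ V| and |E ∩ V|.  If d <= 10 p, the first and second moments of |D ∩ V|, |E ∩ V| and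
   |D ∩ V| - |E ∩ V| over all k-subsets, with Markov's and Chebyshev's inequalities, show that
   at least 3/8 of the choices of V are good for (x, w).
   As the codegrees of x sum to d^2, fewer than 10 (d + 1) / 9 vertices w have p < d / 10, so
   n/5 disjoint pairs with p >= d / 10 can be chosen greedily.  Averaging over V, some V is good
   for more than n/100 of these pairs, and they witness the value (n/100 + 1) sqrt d. *)

(** * Random k-subsets *)

Definition ksubsets (T : finType) (A : {set T}) (k : nat) : {set {set T}} :=
  [set V : {set T} | V \subset A & #|V| == k].

Lemma card_ksubsets (T : finType) (A : {set T}) k : #|ksubsets A k| = 'C(#|A|, k).
Proof. exact: cards_draws. Qed.

Section KSubsets.
Variables (T : finType) (A : {set T}) (k : nat).
Local Notation F := (ksubsets A k).

Lemma card_ksubsets_sup (S : {set T}) : S \subset A -> (#|S| <= k)%N ->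
  #|[set V in F | S \subset V]| = 'C(#|A| - #|S|, k - #|S|).
Proof.
move=> SA Sk.
have -> : [set V in F | S \subset V] =
    (fun W => W :|: S) @: ksubsets (A :\: S) (k - #|S|).
  apply/setP => V; rewrite !inE; apply/idP/imsetP.
  - case/andP => /andP [VA /eqP Vk] SV.
    exists (V :\: S); last by rewrite -{1}(setID V S) (setIidPr SV) setUC.
    by rewrite inE setSD //= cardsD (setIidPr SV) Vk.
  - case=> W; rewrite inE => /andP [WAS /eqP Wk] ->.
    move: WAS; rewrite subsetD => /andP [WA WS].
    rewrite subUset WA SA subsetUr cardsU (disjoint_setI0 WS) cards0 subn0 Wk.
    by rewrite subnK // eqxx.
rewrite card_in_imset ?card_ksubsets ?cardsDS // => W1 W2.
rewrite !inE !subsetD => /andP [/andP [_ W1S] _] /andP [/andP [_ W2S] _].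
move/(congr1 (fun X => X :\: S)); rewrite !setDUl setDv !setU0.
by rewrite (setDidPl W1S) (setDidPl W2S).
Qed.

Lemma card_ksubsets_mem z : z \in A -> (0 < k)%N ->
  #|[set V in F | z \in V]| = 'C(#|A|.-1, k.-1).
Proof.
move=> zA k0.
have -> : [set V in F | z \in V] = [set V in F | [set z] \subset V].
  by apply/setP => V; rewrite !inE sub1set.
by rewrite card_ksubsets_sup ?cards1 ?subn1 ?sub1set.
Qed.

Lemma card_ksubsets_mem2 z z' : z \in A -> z' \in A -> z != z' -> (1 < k)%N ->
  #|[set V in F | (z \in V) && (z' \in V)]| = 'C(#|A|.-2, k.-2).
Proof.
move=> zA z'A zz' k1.
have -> : [set V in F | (z \in V) && (z' \in V)] = [set V in F | [set z; z'] \subset V].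
  by apply/setP => V; rewrite !inE subUset !sub1set.
rewrite card_ksubsets_sup ?cards2 ?zz' ?subUset ?sub1set ?zA ?z'A //.
by rewrite -!subn1 -!subnDA.
Qed.

End KSubsets.

Lemma exchange_sum_subsets (R : nmodType) (T : finType) (A : {set T})
    (F : {set {set T}}) (g : {set T} -> T -> R) :
  (forall V, V \in F -> V \subset A) ->
  \sum_(V in F) \sum_(z in V) g V z = \sum_(z in A) \sum_(V in [set V in F | z \in V]) g V z.
Proof.
move=> FA; rewrite (exchange_big_dep (mem A)) /=; last by move=> V z /FA /subsetP; apply.
by apply: eq_bigr => z _; apply: eq_bigl => V; rewrite inE.
Qed.

Section KSubsetMoments.
Variables (R : comPzRingType) (T : finType) (A : {set T}) (k : nat).
Local Notation F := (ksubsets A k).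

Let ksubsets_sub V : V \in F -> V \subset A.
Proof. by rewrite inE => /andP []. Qed.

Lemma sum_ksubsets_sum (c : T -> R) : (0 < k)%N ->
  \sum_(V in F) \sum_(z in V) c z = 'C(#|A|.-1, k.-1)%:R * \sum_(z in A) c z.
Proof.
move=> k0; rewrite (exchange_sum_subsets _ ksubsets_sub) mulr_sumr.
by apply: eq_bigr => z zA; rewrite sumr_const card_ksubsets_mem // mulr_natl.
Qed.

Lemma sum_ksubsets_sqr_sum (c : T -> R) : (1 < k)%N ->
  \sum_(V in F) (\sum_(z in V) c z) ^+ 2 =
  ('C(#|A|.-1, k.-1)%:R - 'C(#|A|.-2, k.-2)%:R) * \sum_(z in A) c z ^+ 2
  + 'C(#|A|.-2, k.-2)%:R * (\sum_(z in A) c z) ^+ 2.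
Proof.
move=> k1; set C1 : R := 'C(#|A|.-1, k.-1)%:R; set C2 : R := 'C(#|A|.-2, k.-2)%:R.
under eq_bigr => V _ do rewrite expr2 mulr_suml.
rewrite (exchange_sum_subsets _ ksubsets_sub).
have pair_sum z : z \in A -> \sum_(V in [set V in F | z \in V]) c z * \sum_(z' in V) c z' =
    c z * ((C1 - C2) * c z + C2 * \sum_(z' in A) c z').
  move=> zA; rewrite -mulr_sumr (exchange_sum_subsets (A := A)) => [|V]; last first.
    by rewrite inE => /andP [/ksubsets_sub].
  rewrite (bigD1 z zA) [in RHS](bigD1 z zA) /= sumr_const.
  have -> : [set V in [set V in F | z \in V] | z \in V] = [set V in F | z \in V].
    by apply/setP => V; rewrite !inE -andbA andbb.
  rewrite card_ksubsets_mem ?(ltnW k1) // -mulr_natl -/C1.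
  have -> : \sum_(z' | (z' \in A) && (z' != z))
      \sum_(V in [set V in [set V in F | z \in V] | z' \in V]) c z' =
      C2 * \sum_(z' | (z' \in A) && (z' != z)) c z'.
    rewrite mulr_sumr; apply: eq_bigr => z' /andP [z'A z'z]; rewrite sumr_const.
    have -> : [set V in [set V in F | z \in V] | z' \in V] =
        [set V in F | (z' \in V) && (z \in V)].
      by apply/setP => V; rewrite !inE -andbA [(z \in V) && _]andbC.
    by rewrite card_ksubsets_mem2 // -mulr_natl.
  ring.
rewrite (eq_bigr _ pair_sum); under eq_bigr do rewrite mulrDr.
rewrite big_split /= -mulr_suml.
have -> : \sum_(z in A) c z * ((C1 - C2) * c z) = (C1 - C2) * \sum_(z in A) c z ^+ 2.
  by rewrite mulr_sumr; apply: eq_bigr => z _; rewrite mulrCA expr2.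
ring.
Qed.

End KSubsetMoments.

Lemma sum_mem_card (R : pzSemiRingType) (T : finType) (V B : {set T}) :
  \sum_(z in V) ((z \in B)%:R : R) = #|B :&: V|%:R.
Proof.
rewrite (big_setID B) /= [X in _ + X]big1 => [|z]; last by rewrite !inE => /andP [/negbTE ->].
by rewrite addr0 setIC -sumr_const; apply: eq_bigr => z; rewrite inE => /andP [->].
Qed.

Lemma card_markov (R : numDomainType) (I : finType) (F B : {set I}) (f : I -> R) (s : R) :
  B \subset F -> (forall i, i \in F -> 0 <= f i) -> (forall i, i \in B -> s <= f i) ->
  #|B|%:R * s <= \sum_(i in F) f i.
Proof.
move=> BF f0 sf; rewrite (big_setID B) /= (setIidPr BF) mulr_natl -sumr_const.
apply: ler_wpDr; first by apply: sumr_ge0 => i /setDP [/f0].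
exact: ler_sum.
Qed.

Section CardMoments.
Variables (R : realFieldType) (T : finType) (A : {set T}) (k : nat).
Hypotheses (k1 : (1 < k)%N) (kA : (k <= #|A|)%N).
Local Notation F := (ksubsets A k).
Local Notation c1 := ('C(#|A|.-1, k.-1)%:R : R).

Lemma sum_ksubsets_sqr_le (c : T -> R) : \sum_(z in A) c z = 0 ->
  \sum_(V in F) (\sum_(z in V) c z) ^+ 2 <= c1 * \sum_(z in A) c z ^+ 2.
Proof.
move=> c0; rewrite sum_ksubsets_sqr_sum // c0 expr0n mulr0 addr0.
by apply: ler_wpM2r; [apply: sumr_ge0 => z _; apply: sqr_ge0 | rewrite gerBl].
Qed.

Lemma sum_ksubsets_card (X : {set T}) : X \subset A ->
  \sum_(V in F) (#|X :&: V|%:R : R) = c1 * #|X|%:R.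
Proof.
move=> XA; under eq_bigr => V _ do rewrite -sum_mem_card.
by rewrite sum_ksubsets_sum ?(ltnW k1) // sum_mem_card (setIidPl XA).
Qed.

Lemma sum_ksubsets_card_dev (X : {set T}) : X \subset A ->
  \sum_(V in F) (#|X :&: V|%:R - #|X|%:R * k%:R / #|A|%:R) ^+ 2 <= c1 * #|X|%:R :> R.
Proof.
move=> XA; set p : R := #|X|%:R; set N : R := #|A|%:R.
have N0 : N != 0 by rewrite pnatr_eq0 -lt0n (leq_trans _ kA) // ltnW.
pose c z : R := (z \in X)%:R - p / N.
have sum_c : \sum_(z in A) c z = 0.
  by rewrite sumrB sum_mem_card (setIidPl XA) sumr_const -[_ *+ #|A|]mulr_natr mulfVK ?subrr.
have sum_c2 : \sum_(z in A) c z ^+ 2 = p - p * p / N.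
  transitivity (\sum_(z in A) ((z \in X)%:R * (1 - 2 * (p / N)) + (p / N) ^+ 2)).
    by apply: eq_bigr => z _; rewrite /c; case: (z \in X); rewrite /=; ring.
  rewrite big_split /= -mulr_suml sum_mem_card (setIidPl XA) sumr_const -[_ *+ #|A|]mulr_natr.
  by field.
have devE V : V \in F -> #|X :&: V|%:R - p * k%:R / N = \sum_(z in V) c z.
  by rewrite inE => /andP [_ /eqP Vk]; rewrite sumrB sum_mem_card sumr_const Vk mulrAC mulr_natr.
under eq_bigr => V VF do rewrite devE //.
apply: le_trans (sum_ksubsets_sqr_le sum_c) _; rewrite sum_c2 ler_wpM2l // gerBl.
by rewrite divr_ge0 ?mulr_ge0.
Qed.

Lemma sum_ksubsets_card_diff (D E : {set T}) :
  D \subset A -> E \subset A -> [disjoint D & E] -> #|E| = #|D| ->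
  \sum_(V in F) (#|D :&: V|%:R - #|E :&: V|%:R) ^+ 2 <= c1 * (2 * #|D|%:R) :> R.
Proof.
move=> DA EA DE ED; pose c z : R := (z \in D)%:R - (z \in E)%:R.
have sum_c : \sum_(z in A) c z = 0.
  by rewrite sumrB !sum_mem_card (setIidPl DA) (setIidPl EA) ED subrr.
have sum_c2 : \sum_(z in A) c z ^+ 2 = 2 * #|D|%:R.
  transitivity (\sum_(z in A) ((z \in D)%:R + (z \in E)%:R : R)).
    apply: eq_bigr => z _; rewrite /c.
    case zD: (z \in D); first by rewrite (disjointFr DE zD) /=; ring.
    by case: (z \in E) => /=; ring.
  by rewrite big_split /= !sum_mem_card (setIidPl DA) (setIidPl EA) ED -mulr2n mulr_natl.
under eq_bigr => V _ do rewrite -!sum_mem_card -sumrB.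
by rewrite -sum_c2; apply: sum_ksubsets_sqr_le.
Qed.

End CardMoments.

(** * Good draws *)

(* For the host half [V] of size [k], the pair with private neighbourhoods [D] and [E]
   satisfies conditions (1)-(3) of guest-goodness with [d_i = d], the last one squared. *)
Definition good_draw (R : numDomainType) (T : finType) (k d : nat) (D E V : {set T}) : bool :=
  [&& d%:R / 100 <= #|D :&: V|%:R :> R, #|D :&: V|%:R <= 2 / 3 * k%:R :> R,
      #|E :&: V|%:R <= 2 / 3 * k%:R :> R &
      (#|D :&: V|%:R - #|E :&: V|%:R) ^+ 2 <= 400 * d%:R :> R].

Section GoodDraws.
Variables (R : realFieldType) (T : finType) (A D E : {set T}) (k d : nat).
Hypotheses (DA : D \subset A) (EA : E \subset A) (DE : [disjoint D & E]) (ED : #|E| = #|D|).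
Hypotheses (k1 : (1 < k)%N) (kA : (k <= #|A|)%N) (Ak : (#|A| <= 2 * k)%N).
Hypotheses (D0 : (0 < #|D|)%N) (Dd : (#|D| <= d)%N) (dD : (d <= 10 * #|D|)%N).
Local Notation F := (ksubsets A k).
Local Notation Fc := (#|F|%:R : R).
Local Notation c1 := ('C(#|A|.-1, k.-1)%:R : R).
Local Notation p := (#|D|%:R : R).
(* [|X :&: V|] has mean [p k / |A|] when [|X| = p], so [s] is the room below the cap
   [2 k / 3] that Chebyshev's inequality works with. *)
Let s : R := 2 / 3 * k%:R - p * k%:R / #|A|%:R.
Hypotheses (s0 : 0 <= s) (ps : 100 * p <= s ^+ 2).

Let p0 : 0 < p. Proof. by rewrite ltr0n. Qed.

Let c1_Fc : c1 * #|A|%:R = k%:R * Fc.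
Proof.
by rewrite card_ksubsets -!natrM mulnC mul_bin_diag prednK // ltnW.
Qed.

Let c1_bounds : c1 <= Fc <= 2 * c1.
Proof.
have N0 : 0 < #|A|%:R :> R by rewrite ltr0n (leq_trans _ kA) // ltnW.
have kN : k%:R <= #|A|%:R :> R by rewrite ler_nat.
have Nk : #|A|%:R <= 2 * k%:R :> R by rewrite -natrM ler_nat.
have Fc0 : 0 <= Fc by []; have c10 : 0 <= c1 by [].
by have := c1_Fc; move=> cF; apply/andP; split; nra.
Qed.

Lemma card_low_draws :
  #|[set V in F | #|D :&: V|%:R < d%:R / 100 :> R]|%:R <= 5 / 9 * Fc.
Proof.
set B := [set V in F | _].
have BF : B \subset F by apply/subsetP => V; rewrite inE => /andP [].
have f0 V : V \in F -> 0 <= p - #|D :&: V|%:R.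
  by rewrite subr_ge0 ler_nat subset_leq_card // subsetIl.
have fB V : V \in B -> p - d%:R / 100 <= p - #|D :&: V|%:R.
  by rewrite inE => /andP [_ /ltW]; rewrite lerD2l lerN2.
have := card_markov BF f0 fB.
rewrite sumrB sumr_const sum_ksubsets_card // -[p *+ _]mulr_natr.
have dp : d%:R <= 10 * p by rewrite -natrM ler_nat.
have /andP [_ hc] := c1_bounds; have B0 : 0 <= #|B|%:R :> R by [].
have h1 : #|B|%:R * (9 / 10 * p) <= #|B|%:R * (p - d%:R / 100) by apply: ler_wpM2l => //; lra.
have h2 : Fc / 2 * p <= c1 * p by apply: ler_wpM2r => //; lra.
move=> hB; have : p * (9 / 10 * #|B|%:R) <= p * (Fc / 2) by lra.
by rewrite ler_pM2l // => ?; lra.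
Qed.

Lemma card_high_draws (X : {set T}) : X \subset A -> #|X| = #|D| ->
  #|[set V in F | 2 / 3 * k%:R < #|X :&: V|%:R :> R]|%:R <= Fc / 100.
Proof.
move=> XA Xp; set B := [set V in F | _].
have BF : B \subset F by apply/subsetP => V; rewrite inE => /andP [].
have f0 V : V \in F -> 0 <= (#|X :&: V|%:R - p * k%:R / #|A|%:R) ^+ 2 by rewrite sqr_ge0.
have fB V : V \in B -> s ^+ 2 <= (#|X :&: V|%:R - p * k%:R / #|A|%:R) ^+ 2.
  rewrite inE => /andP [_ hV].
  have sV : s <= #|X :&: V|%:R - p * k%:R / #|A|%:R by rewrite /s; lra.
  by rewrite ler_sqr ?nnegrE // (le_trans s0 sV).
have := sum_ksubsets_card_dev R k1 kA XA; rewrite Xp => /(le_trans (card_markov BF f0 fB)) hB.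
have /andP [hc _] := c1_bounds.
have hBs : #|B|%:R * (100 * p) <= #|B|%:R * s ^+ 2 by apply: ler_wpM2l.
have hcp : c1 * p <= Fc * p by apply: ler_wpM2r => //; apply: ltW.
have : p * (100 * #|B|%:R) <= p * Fc by lra.
by rewrite ler_pM2l // => ?; lra.
Qed.

Lemma card_unbalanced_draws :
  #|[set V in F | 400 * d%:R < (#|D :&: V|%:R - #|E :&: V|%:R) ^+ 2 :> R]|%:R <= Fc / 200.
Proof.
set B := [set V in F | _].
have BF : B \subset F by apply/subsetP => V; rewrite inE => /andP [].
have f0 V : V \in F -> 0 <= (#|D :&: V|%:R - #|E :&: V|%:R) ^+ 2 :> R by rewrite sqr_ge0.
have fB V : V \in B -> 400 * d%:R <= (#|D :&: V|%:R - #|E :&: V|%:R) ^+ 2 :> R.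
  by rewrite inE => /andP [_ /ltW].
have := le_trans (card_markov BF f0 fB) (sum_ksubsets_card_diff R k1 DA EA DE ED).
have /andP [hc _] := c1_bounds; have pd : p <= d%:R by rewrite ler_nat.
have d0 : 0 < d%:R :> R := lt_le_trans p0 pd.
have hcp : c1 * (2 * p) <= Fc * (2 * d%:R) by apply: ler_pM; rewrite // ?ler_pM2l // mulr_ge0.
move=> hB; have : d%:R * (400 * #|B|%:R) <= d%:R * (2 * Fc) by lra.
by rewrite ler_pM2l // => ?; lra.
Qed.

Lemma card_good_draws : (3 * #|F| <= 8 * #|[set V in F | good_draw R k d D E V]|)%N.
Proof.
have := card_low_draws; have := card_high_draws DA erefl.
have := card_high_draws EA ED; have := card_unbalanced_draws.
set G := [set V in F | good_draw R k d D E V].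
set B1 := [set V in F | #|D :&: V|%:R < d%:R / 100 :> R].
set B2 := [set V in F | 2 / 3 * k%:R < #|D :&: V|%:R :> R].
set B3 := [set V in F | 2 / 3 * k%:R < #|E :&: V|%:R :> R].
set B4 := [set V in F | 400 * d%:R < (#|D :&: V|%:R - #|E :&: V|%:R) ^+ 2 :> R].
have cover : F \subset G :|: B1 :|: B2 :|: B3 :|: B4.
  apply/subsetP => V VF; move: (VF); rewrite inE => VF'; rewrite !inE VF' /= /good_draw !ltNge.
  by case: (_ <= _); case: (_ <= _); case: (_ <= _); case: (_ <= _).
have card_cover : (#|F| <= #|G| + #|B1| + #|B2| + #|B3| + #|B4|)%N.
  apply: leq_trans (subset_leq_card cover) _.
  by do 4 (apply: leq_trans (leq_card_setU _ _).1 _; rewrite leq_add2r).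
have F0 : 0 <= Fc by [].
rewrite -(ler_nat R) !natrM; move: card_cover; rewrite -(ler_nat R) !natrD => *; lra.
Qed.

End GoodDraws.

(** * Private neighbourhoods in regular graphs *)

(* Removing [w] makes [#|private_nbhd e x w| = #|private_nbhd e w x|] in a regular graph. *)
Definition private_nbhd (n : nat) (e : rel 'I_n) (x w : 'I_n) : {set 'I_n} :=
  [set z | [&& e x z, ~~ e w z & z != w]].

Lemma sum_nat_mem (T : finType) (A B : {set T}) : (\sum_(z in A) (z \in B) = #|A :&: B|)%N.
Proof.
by rewrite -sum1_card -big_mkcondr; apply: eq_bigl => z; rewrite inE.
Qed.

Section RegularGraph.
Variables (n d : nat) (e : rel 'I_n).
Hypotheses (sym_e : symmetric e) (irr_e : irreflexive e) (reg_e : regular e d).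
Local Notation N x := [set z | e x z].
Local Notation P := (private_nbhd e).

Lemma card_private_nbhd x w : #|P x w| = (d - #|N x :&: N w| - e x w)%N.
Proof.
have -> : P x w = (N x :\: N w) :\ w.
  by apply/setP => z; rewrite !inE; case: (e x z); case: (e w z); case: (z != w).
by have := cardsD1 w (N x :\: N w); rewrite cardsD reg_e !inE irr_e /= => ->; rewrite addKn.
Qed.

Lemma card_private_nbhdC x w : #|P x w| = #|P w x|.
Proof. by rewrite !card_private_nbhd setIC sym_e. Qed.

Lemma sum_card_nbhdI x : (\sum_w #|N x :&: N w| = d * d)%N.
Proof.
under eq_bigr => w _ do rewrite -sum_nat_mem.
rewrite exchange_big /= -{1}(reg_e x) -sum_nat_const; apply: eq_bigr => z _.
by rewrite -(reg_e z) -sum1dep_card [RHS]big_mkcond; apply: eq_bigr => w _; rewrite !inE sym_e.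
Qed.

Lemma sum_adj x : (\sum_w e x w = d)%N.
Proof.
by rewrite -(reg_e x) -sum1dep_card [RHS]big_mkcond; apply: eq_bigr => w _; case: (e x w).
Qed.

Lemma card_poor_partners x : (0 < d)%N ->
  (9 * #|[set w | 10 * #|P x w| < d]| <= 10 * (d + 1))%N.
Proof.
move=> d0; set B := [set w | _].
suff : (d * (9 * #|B|) <= d * (10 * (d + 1)))%N by rewrite leq_pmul2l.
have -> : (d * (9 * #|B|) = \sum_(w in B) 9 * d)%N by rewrite sum_nat_const; lia.
apply: (@leq_trans (\sum_(w in B) 10 * (#|N x :&: N w| + e x w))%N).
  apply: leq_sum => w; rewrite inE card_private_nbhd; case: (e x w) => /=; lia.
apply: (@leq_trans (\sum_w 10 * (#|N x :&: N w| + e x w))%N).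
  by rewrite [X in (_ <= X)%N](bigID (mem B)) /= leq_addr.
by rewrite -big_distrr /= big_split /= sum_card_nbhdI sum_adj; lia.
Qed.

Lemma exists_private_pair (S : {set 'I_n}) : (0 < d)%N ->
  (10 * (d + 1) < 9 * #|~: S|)%N ->
  exists x w, [/\ x \notin S, w \notin S, x != w & (d <= 10 * #|P x w|)%N].
Proof.
move=> d0 hS; have [x xS] : exists x, x \in ~: S by apply/card_gt0P; lia.
have := card_poor_partners x d0; set B := [set w | _] => hB.
set G := [set w in ~: S | (d <= 10 * #|P x w|)%N].
have : ~: S \subset G :|: B by apply/subsetP => w wS; rewrite !inE -!in_setC wS /=; case: leqP.
move=> /subset_leq_card/leq_trans/(_ (leq_card_setU _ _).1) hG.
(* [set] identifies two elaborations of [#|B|] that [lia] would see as unrelated atoms. *)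
have [w] : exists w, w \in G.
  by apply/card_gt0P; move: hB hG; set b := #|B| => hB hG; lia.
rewrite !inE => /andP [wS dw]; exists x, w; split => //; first by rewrite -in_setC.
apply: contraTneq dw => <-; rewrite -ltnNge card_private_nbhd setIid reg_e irr_e subnn; lia.
Qed.

Lemma exists_private_pairs j : (0 < d)%N -> (18 * j + 10 * (d + 1) < 9 * n)%N ->
  exists s : seq ('I_n * 'I_n), [/\ size s = j, uniq (map fst s ++ map snd s) &
    all (fun q => d <= 10 * #|P q.1 q.2|)%N s].
Proof.
move=> d0; elim: j => [|j IH] hj; first by exists [::].
have [s [size_s uniq_s all_s]] := IH ltac:(lia).
set L := map fst s ++ map snd s.
have cardL : (#|[set z in L]| <= 2 * j)%N.
  by rewrite cardsE (leq_trans (card_size L)) // size_cat !size_map size_s; lia.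
have [x [w [xL wL xw dxw]]] : exists x w, [/\ x \notin [set z in L], w \notin [set z in L],
    x != w & (d <= 10 * #|P x w|)%N].
  apply: exists_private_pair => //.
  by rewrite -(addKn #|[set z in L]| #|~: _|) cardsC card_ord; lia.
exists ((x, w) :: s); split => /=; [by rewrite size_s | | by rewrite dxw].
move: xL wL; rewrite !inE -/L => xL wL.
rewrite -cat1s uniq_catCA cat1s /= -/L wL uniq_s !mem_cat inE (negbTE xw) /=.
by rewrite -mem_cat andbT.
Qed.

Lemma private_nbhd_sub x w : P x w \subset ~: [set x; w].
Proof.
apply/subsetP => z; rewrite !inE negb_or => /and3P [exz _ ->]; rewrite andbT.
by apply: contraTneq exz => ->; rewrite irr_e.
Qed.

Lemma private_nbhd_disjoint x w : [disjoint P x w & P w x].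
Proof. by rewrite -setI_eq0; apply/eqP/setP => z; rewrite !inE; case: (e x z); rewrite ?andbF. Qed.

Lemma card_private_nbhd_le x w : (#|P x w| <= d)%N.
Proof. by rewrite card_private_nbhd -subnDA leq_subr. Qed.

End RegularGraph.

(** * Numerical estimates *)

Lemma mul_bin_sub2 n k :
  ('C(n - 2, k) * (n * (n - 1)) = 'C(n, k) * ((n - k) * (n - k - 1)))%N.
Proof.
rewrite subn2 subn1 subnAC subn1 mulnCA [(_ * n.-1)%N]mulnC mul_bin_down mulnCA mul_bin_down.
ring.
Qed.

Section LargeOrder.
Variable n : nat.
Hypothesis n_large : (20000 <= n)%N.

(* [lia] ignores nat literals above 5000, and [lra] handles the literal 20000 very slowly. *)
Let n_ge100 : (100 <= n)%N := leq_trans (isT : 100 <= 20000)%N n_large.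
Let n_largeR (R : realFieldType) : 200 * 100 <= n%:R :> R.
Proof. by rewrite (_ : 200 * 100 = 20000%:R) ?ler_nat // -natrM. Qed.

Lemma split_threshold (R : realFieldType) (k p : nat) :
  (n <= 2 * k)%N -> (k <= n)%N -> (2 * p <= n)%N ->
  0 <= 2 / 3 * k%:R - p%:R * k%:R / (n - 2)%:R :> R /\
  100 * p%:R <= (2 / 3 * k%:R - p%:R * k%:R / (n - 2)%:R) ^+ 2 :> R.
Proof.
move=> nk kn pn.
have N2 : (n - 2)%:R = n%:R - 2 :> R by rewrite natrB //; lia.
have hn' := n_largeR R.
have nk' : n%:R <= 2 * k%:R :> R by rewrite -natrM ler_nat.
have pn' : 2 * p%:R <= n%:R :> R by rewrite -natrM ler_nat.
have k0 : 0 <= k%:R :> R by [].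
have N0 : 0 < n%:R - 2 :> R by lra.
have ratio : p%:R * k%:R / (n%:R - 2) <= 17 / 30 * k%:R :> R by rewrite ler_pdivrMr //; nra.
have sk : k%:R / 10 <= 2 / 3 * k%:R - p%:R * k%:R / (n - 2)%:R :> R by rewrite N2; lra.
split; first lra.
apply: le_trans (_ : (k%:R / 10) ^+ 2 <= _); last by rewrite ler_sqr ?nnegrE //; lra.
have : (n%:R / 20) ^+ 2 <= (k%:R / 10) ^+ 2 :> R by rewrite ler_sqr ?nnegrE //; lra.
have : 50 * n%:R <= (n%:R / 20) ^+ 2 :> R by nra.
lra.
Qed.

Lemma averaging_gapR (R : realFieldType) :
  (n %/ 100)%:R * (n%:R * (n%:R - 1)) < 3 / 8 * (n %/ 5)%:R * ((n./2)%:R * ((n./2)%:R - 1)) :> R.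
Proof.
have ha : 100 * (n %/ 100)%:R <= n%:R :> R.
  by rewrite -natrM ler_nat; lia.
have hb : n%:R <= 5 * (n %/ 5)%:R + 4 :> R.
  have : (n <= 5 * (n %/ 5) + 4)%N by lia.
  by rewrite -(ler_nat R) natrD natrM.
have hc : n%:R <= 2 * (n./2)%:R + 1 :> R.
  have : (n <= 2 * n./2 + 1)%N by rewrite -divn2; lia.
  by rewrite -(ler_nat R) natrD natrM.
have hn' := n_largeR R.
set N : R := n%:R in ha hb hc hn' *.
set a : R := (n %/ 100)%:R in ha *; set b : R := (n %/ 5)%:R in hb *.
set c : R := (n./2)%:R in hc *.
have NN : 0 <= N * (N - 1) by apply: mulr_ge0; lra.
have e1 : a * (N * (N - 1)) <= N / 100 * (N * (N - 1)) by apply: ler_wpM2r => //; lra.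
have e2 : (N - 1) / 2 * ((N - 3) / 2) <= c * (c - 1) by apply: ler_pM; lra.
have e3 : (N - 4) / 5 * ((N - 1) / 2 * ((N - 3) / 2)) <= b * (c * (c - 1)).
  by apply: ler_pM => //; [lra | apply: mulr_ge0; lra | lra].
have e4 : N / 100 * (N * (N - 1)) < 3 / 8 * ((N - 4) / 5 * ((N - 1) / 2 * ((N - 3) / 2))).
  rewrite -subr_gt0.
  have -> : 3 / 8 * ((N - 4) / 5 * ((N - 1) / 2 * ((N - 3) / 2))) - N / 100 * (N * (N - 1)) =
      (N - 1) * (140 * N * (N - 15) + 3600) / 16000 by field.
  apply: divr_gt0; last lra.
  by apply: mulr_gt0; [lra | apply: ltr_wpDl; [apply: mulr_ge0; lra | lra]].
lra.
Qed.

Lemma averaging_gap :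
  (8 * (n %/ 100) * 'C(n, n - n./2) < n %/ 5 * (3 * 'C(n - 2, n - n./2)))%N.
Proof.
have := mul_bin_sub2 n (n - n./2).
have -> : (n - (n - n./2))%N = n./2 by rewrite subKn // -divn2 leq_div.
move=> /(congr1 (fun m => m%:R : rat)); rewrite !natrM !natrB; try by rewrite -?divn2; lia.
set C := 'C(n, _)%:R; set C2 := 'C(n - 2, _)%:R; set N : rat := n%:R; set h : rat := (n./2)%:R.
move=> key; rewrite -(ltr_nat rat) !natrM -/C -/C2 -/N.
have C0 : 0 < C by rewrite ltr0n bin_gt0 leq_subr.
have NN : 0 < N * (N - 1).
  by apply: mulr_gt0; rewrite /N ?subr_gt0 ?ltr1n ?ltr0n; lia.
rewrite -(ltr_pM2r NN).
have -> : (n %/ 5)%:R * (3 * C2) * (N * (N - 1)) = 8 * C * (3 / 8 * (n %/ 5)%:R * (h * (h - 1))).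
  by rewrite -mulrA -mulrA key; field.
have -> : 8 * (n %/ 100)%:R * C * (N * (N - 1)) = 8 * C * ((n %/ 100)%:R * (N * (N - 1))) by ring.
by rewrite ltr_pM2l ?mulr_gt0 // averaging_gapR.
Qed.

End LargeOrder.

(** * Guest-goodness *)

Lemma sum_count_card (T : eqType) (I : finType) (F : {set I}) (P : T -> pred I) (s : seq T) :
  (\sum_(i in F) count (P^~ i) s = \sum_(q <- s) #|[set i in F | P q i]|)%N.
Proof.
under eq_bigr => i _ do rewrite -sum1_count big_mkcond /=.
rewrite exchange_big /=; apply: eq_bigr => q _.
by rewrite -big_mkcondr -sum1dep_card.
Qed.

Lemma exists_rich_member (T : eqType) (I : finType) (F : {set I}) (P : T -> pred I)
    (s : seq T) (a b M : nat) :
  (forall q, q \in s -> b <= a * #|[set i in F | P q i]|)%N ->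
  (a * M * #|F| < size s * b)%N ->
  exists2 i, i \in F & (M < count (P^~ i) s)%N.
Proof.
move=> many gap; apply/exists_inP; apply: contraLR gap; rewrite negb_exists_in -leqNgt.
move=> /forall_inP poor.
have sum_lb : (size s * b <= a * \sum_(i in F) count (P^~ i) s)%N.
  rewrite sum_count_card big_distrr /= -sum1_size big_distrl /= mul1n.
  by rewrite big_seq_cond [X in (_ <= X)%N]big_seq_cond; apply: leq_sum => q /andP [/many].
apply: (leq_trans sum_lb); rewrite -mulnA leq_mul2l [(M * _)%N]mulnC -sum_nat_const.
by apply/orP; right; apply: leq_sum => i /poor; rewrite -leqNgt.
Qed.

Lemma uniq_pairs_tnth (T : eqType) (s : seq (T * T)) :
  uniq (map fst s ++ map snd s) ->
  [/\ injective (fun i => (tnth (in_tuple s) i).1),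
      injective (fun i => (tnth (in_tuple s) i).2) &
      forall i j, (tnth (in_tuple s) i).1 != (tnth (in_tuple s) j).2].
Proof.
rewrite cat_uniq => /and3P [uniq1 /hasPn disj uniq2]; split.
- by move=> i j; rewrite -!(tnth_map fst); apply/(tuple_uniqP (map_tuple fst (in_tuple s))).
- by move=> i j; rewrite -!(tnth_map snd); apply/(tuple_uniqP (map_tuple snd (in_tuple s))).
- move=> i j; apply: contraTneq (disj _ (map_f snd (mem_tnth j (in_tuple s)))) => <-.
  by rewrite negbK map_f // mem_tnth.
Qed.

Lemma nbhdD_private (n : nat) (e : rel 'I_n) (V : {set 'I_n}) x w :
  V \subset ~: [set x; w] -> nbhd e V x :\: nbhd e V w = private_nbhd e x w :&: V.
Proof.
move=> /subsetP Vxw; apply/setP => z; rewrite !inE.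
case zV: (z \in V); rewrite ?andbF //=.
by move: (Vxw z zV); rewrite !inE negb_or => /andP [_ ->]; rewrite !andbT andbC.
Qed.

Lemma guest_good0 (R : realType) (n : nat) (e : rel 'I_n) : guest_good e (0 : R).
Proof.
have [U] : exists U : {set 'I_n}, U \in [set U : {set 'I_n} | #|U| == n./2].
  by apply/card_gt0P; rewrite card_draws card_ord bin_gt0 -divn2 leq_div.
rewrite inE => /eqP cardU; exists U; split => //.
pose none := widen_ord (leq0n n).
exists 0%N, none, none, (fun=> 0%N).
do ![by case | split]; last by rewrite big_ord0.
by rewrite divr_ge0.
Qed.

Lemma guest_good_of_pairs (R : realType) (n d : nat) (e : rel 'I_n) (V : {set 'I_n})
    (s : seq ('I_n * 'I_n)) :
  (0 < d)%N -> #|~: V| = n./2 -> (20 * size s <= n)%N -> uniq (map fst s ++ map snd s) ->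
  (forall q, q \in s -> (V \subset ~: [set q.1; q.2]) &&
     good_draw R #|V| d (private_nbhd e q.1 q.2) (private_nbhd e q.2 q.1) V) ->
  guest_good e ((size s)%:R * Num.sqrt (d%:R : R)).
Proof.
move=> d0 cardU small uniq_s good_s; exists (~: V); split => //=; rewrite setCK.
have [inj1 inj2 neq] := uniq_pairs_tnth uniq_s.
exists (size s), (fun i => (tnth (in_tuple s) i).1), (fun i => (tnth (in_tuple s) i).2), (fun=> d).
have good_i i := good_s _ (mem_tnth i (in_tuple s)).
do 3 (split => //); split.
  move=> i; have /andP [/subsetP Vq _] := good_i i.
  by split; rewrite inE; apply: contraT; rewrite negbK => /Vq; rewrite !inE eqxx ?orbT.
split; first by rewrite ler_pdivlMr // -natrM ler_nat mulnC.
split; first by [].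
split; first by rewrite sumr_const card_ord mulr_natl.
move=> i; have /andP [Vq good] := good_i i; move: good Vq.
set x := (tnth _ i).1; set w := (tnth _ i).2 => /and4P [g1 g2 g3 g4] Vxw.
have Vwx : V \subset ~: [set w; x] by rewrite setUC.
have := cardsID (nbhd e V w) (nbhd e V x); have := cardsID (nbhd e V x) (nbhd e V w).
rewrite (nbhdD_private e Vxw) (nbhdD_private e Vwx) [nbhd e V w :&: _]setIC => <- <-.
rewrite !natrD; split; [lra | lra | lra | right].
set a : R := #|_ :&: V|%:R in g1 g2 g4 *; set b : R := #|_ :&: V|%:R in g3 g4 *.
rewrite [_ + a]addrC addrKA -sqrtr_sqr.
have -> : 20 * Num.sqrt d%:R = Num.sqrt (400 * d%:R) :> R.
  by rewrite sqrtrM // (_ : 400 = 20 ^+ 2) ?sqrtr_sqr ?ger0_norm //; ring.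
exact: ler_wsqrtr.
Qed.

Section GuestGood.
Variables (n d : nat) (e : rel 'I_n).
Hypotheses (sym_e : symmetric e) (irr_e : irreflexive e) (reg_e : regular e d).
Hypotheses (n_large : (20000 <= n)%N) (d0 : (0 < d)%N) (dn : (d <= n./2)%N).
Let n_ge100 : (100 <= n)%N := leq_trans (isT : 100 <= 20000)%N n_large.
Local Notation k := (n - n./2)%N.
Local Notation P := (private_nbhd e).

Lemma card_good_pair_draws (R : realFieldType) x w : x != w -> (d <= 10 * #|P x w|)%N ->
  (3 * 'C(n - 2, k) <= 8 * #|[set V in ksubsets [set: 'I_n] k |
     (V \subset ~: [set x; w]) && good_draw R k d (P x w) (P w x) V]|)%N.
Proof.
move=> xw dP; set A := ~: [set x; w].
have cardA : #|A| = (n - 2)%N by rewrite cardsCs setCK card_ord cards2 xw.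
have Pd := card_private_nbhd_le irr_e reg_e x w.
have [s0 ps] := split_threshold n_large R (k := k) (p := #|P x w|) ltac:(lia) ltac:(lia) ltac:(lia).
rewrite -cardA in s0 ps.
have EA : P w x \subset A by rewrite /A setUC private_nbhd_sub.
have kA : (k <= #|A|)%N by rewrite cardA -divn2; lia.
have Ak : (#|A| <= 2 * k)%N by rewrite cardA -divn2; lia.
have k1 : (1 < k)%N by rewrite -divn2; lia.
have P0 : (0 < #|P x w|)%N by move: dP; rewrite lt0n; apply: contraTneq => ->; lia.
have := card_good_draws (private_nbhd_sub irr_e x w) EA
  (private_nbhd_disjoint e x w) (esym (card_private_nbhdC sym_e irr_e reg_e x w))
  k1 kA Ak P0 Pd dP s0 ps.
rewrite card_ksubsets cardA => /leq_trans; apply; rewrite leq_mul2l; apply/orP; right.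
apply/subset_leq_card/subsetP => V; rewrite !inE => /andP [/andP [VA ->] good].
by rewrite VA good subsetT.
Qed.

Lemma exists_rich_split (R : realFieldType) :
  exists V : {set 'I_n}, exists s : seq ('I_n * 'I_n),
    [/\ #|V| = k, size s = (n %/ 100).+1, uniq (map fst s ++ map snd s) &
      forall q, q \in s ->
        (V \subset ~: [set q.1; q.2]) && good_draw R k d (P q.1 q.2) (P q.2 q.1) V].
Proof.
have fit : (18 * (n %/ 5) + 10 * (d + 1) < 9 * n)%N by have := dn; rewrite -divn2; lia.
have [s0 [size_s0 uniq_s0 private_s0]] := exists_private_pairs sym_e irr_e reg_e d0 fit.
pose good (q : 'I_n * 'I_n) (V : {set 'I_n}) :=
  (V \subset ~: [set q.1; q.2]) && good_draw R k d (P q.1 q.2) (P q.2 q.1) V.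
have many q : q \in s0 ->
    (3 * 'C(n - 2, k) <= 8 * #|[set V in ksubsets [set: 'I_n] k | good q V]|)%N.
  move=> qs0; apply: card_good_pair_draws; last by move/allP: private_s0; apply.
  move: uniq_s0; rewrite cat_uniq => /and3P [_ /hasPn disj _].
  by apply: contraTneq (disj _ (map_f snd qs0)) => <-; rewrite negbK map_f.
have gap : (8 * (n %/ 100) * #|ksubsets [set: 'I_n] k| < size s0 * (3 * 'C(n - 2, k)))%N.
  by rewrite card_ksubsets cardsT card_ord size_s0 averaging_gap.
have [V] := exists_rich_member many gap; rewrite inE => /andP [_ /eqP cardV] rich.
exists V, (take (n %/ 100).+1 [seq q <- s0 | good q V]); split => //.
- by rewrite size_takel // size_filter.
- apply: subseq_uniq uniq_s0; apply: cat_subseq; apply: map_subseq;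
    exact: subseq_trans (take_subseq _ _) (filter_subseq _ _).
- by move=> q /mem_take; rewrite mem_filter => /andP [].
Qed.

Lemma guest_good_large (R : realType) :
  exists t : R, n%:R * Num.sqrt (d%:R : R) / 100%:R <= t /\ guest_good e t.
Proof.
have [V [s [cardV size_s uniq_s good_s]]] := exists_rich_split R.
exists ((size s)%:R * Num.sqrt (d%:R : R)); split.
  rewrite ler_pdivrMr // mulrAC ler_wpM2r ?sqrtr_ge0 // size_s -natrM ler_nat; lia.
apply: (guest_good_of_pairs (V := V)) => //.
  by rewrite -(addKn #|V| #|~: V|) cardsC cardV card_ord subKn // -divn2 leq_div.
  by rewrite size_s; lia.
by rewrite cardV.
Qed.

End GuestGood.

Theorem lemma2p14 (R : realType) :
  exists n0 : nat, forall (n d : nat) (e : rel 'I_n),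
    (n0 <= n)%N -> (d <= n./2)%N ->
    simple_graph e -> regular e d ->
    exists t : R, n%:R * Num.sqrt (d%:R : R) / 100%:R <= t /\ guest_good e t.
Proof.
exists 20000%N => n d e n_large dn [sym_e irr_e] reg_e.
have [-> | d0] := posnP d; last exact: guest_good_large.
by exists 0; split; [rewrite sqrtr0 mulr0 mul0r | exact: guest_good0].
Qed.
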